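(* Let $\mathcal{R}$ be a left-linear TRS and suppose $s$ strongly $p$-converges to $t$ in $\mathcal{R}$. Then there is a term $t'$ with $t\le_\bot t'$ such that $s$ weakly $p$-converges to $t'$ in $\mathcal{R}$.
   Context: Partial terms over $\Sigma_\bot=\Sigma\uplus\{\bot\}$ ordered by $\le_\bot$ ($s\le_\bot t$ iff $s$ is $t$ with some subterms replaced by $\bot$) form a complete semilattice; $\liminf_{\iota\to\alpha}a_\iota=\bigvee_{\beta<\alpha}\bigwedge_{\beta\le\iota<\alpha}a_\iota$. For a reduction $S=(t_\iota\to_{\pi_\iota}t_{\iota+1})_{\iota<\alpha}$: it weakly $p$-converges to $t$ if $\liminf_{\iota\to\lambda}t_\iota=t_\lambda$ for every limit $\lambda<\alpha$ and $t=\liminf_{\iota\to\hat\alpha}t_\iota$ ($\hat\alpha=\alpha+1$ if closed, so $t$ is the last term, $\hat\alpha=\alpha$ if open). With contexts $c_\iota$ ($t_\iota$ with position $\pi_\iota$ replaced by $\bot$), it strongly $p$-converges to $t$ if $\liminf_{\iota\to\lambda}c_\iota=t_\lambda$ for every limit $\lambda<\alpha$ and $t$ is the last term (closed) or $t=\liminf_{\iota\to\alpha}c_\iota$ (open). *)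

From mathcomp Require Import ssreflect ssrfun ssrbool eqtype ssrnat seq.

Set Implicit Arguments.
Unset Strict Implicit.
Unset Printing Implicit Defensive.

Definition pos := seq nat.

Inductive lab (Sig : Type) : Type :=
| LFun of Sig
| LVar of nat
| LBot.
Arguments LVar {Sig} _.
Arguments LBot {Sig}.

Section Terms.
Variable Sig : Type.
Variable ar : Sig -> nat.

(* a term is a labelling of a tree domain: the root exists, and the
   children of a position p are exactly 0..arity-1 of the function
   symbol at p (variables and bot are nullary). *)
Definition is_term (f : pos -> option (lab Sig)) : Prop :=
  f [::] <> None /\
  forall (p : pos) (i : nat),
    f (rcons p i) <> None <-> exists g, f p = Some (LFun g) /\ i < ar g.

Record term := mkTerm { tf :> pos -> option (lab Sig); twf : is_term tf }.

Definition le_bot (s t : term) : Prop :=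
  forall p, s p <> None -> s p <> Some LBot -> s p = t p.

Definition is_glb (P : term -> Prop) (m : term) : Prop :=
  (forall u, P u -> le_bot m u) /\
  (forall m', (forall u, P u -> le_bot m' u) -> le_bot m' m).

Definition is_lub (P : term -> Prop) (m : term) : Prop :=
  (forall u, P u -> le_bot u m) /\
  (forall m', (forall u, P u -> le_bot u m') -> le_bot m m').

(* (t sigma) at position q ++ p, where q is the part already traversed *)
Fixpoint substf (t : pos -> option (lab Sig)) (sigma : nat -> term)
         (q : pos) (p : pos) : option (lab Sig) :=
  match t q with
  | Some (LVar x) => sigma x p
  | _ => match p with
         | [::] => t q
         | i :: p' => substf t sigma (rcons q i) p'
         end
  end.

Definition apply_subst (t : pos -> option (lab Sig)) (sigma : nat -> term) :=
  substf t sigma [::].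

Definition replace (s : pos -> option (lab Sig)) (pi : pos)
           (u : pos -> option (lab Sig)) : pos -> option (lab Sig) :=
  fun p => if prefix pi p then u (drop (size pi) p) else s p.

Definition bot_fun : pos -> option (lab Sig) :=
  fun p => if p is [::] then Some LBot else None.

Definition rule := (term * term)%type.

Definition finite_term (t : term) : Prop :=
  exists n, forall p : pos, n < size p -> t p = None.

Definition occurs (x : nat) (t : term) : Prop := exists p, t p = Some (LVar x).

Definition bot_free (t : term) : Prop := forall p, t p <> Some LBot.

Definition is_rule (rho : rule) : Prop :=
  let: (l, r) := rho in
  finite_term l /\ (forall x, l [::] <> Some (LVar x)) /\
  bot_free l /\ bot_free r /\ (forall x, occurs x r -> occurs x l).

Definition TRS (R : rule -> Prop) : Prop := forall rho, R rho -> is_rule rho.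

Definition linear (t : term) : Prop :=
  forall x p q, t p = Some (LVar x) -> t q = Some (LVar x) -> p = q.

Definition left_linear (R : rule -> Prop) : Prop :=
  forall rho, R rho -> linear rho.1.

Definition step (s t : term) (pi : pos) (rho : rule) (sigma : nat -> term) : Prop :=
  (forall p, s (pi ++ p) = apply_subst rho.1 sigma p) /\
  (forall p, t p = replace s pi (apply_subst rho.2 sigma) p).

End Terms.

Record wordT := WOrd {
  wcar :> Type;
  wlt : wcar -> wcar -> Prop;
  wlt_wf : well_founded wlt;
  wlt_trans : forall x y z, wlt x y -> wlt y z -> wlt x z;
  wlt_total : forall x y, wlt x y \/ x = y \/ wlt y x }.

(* An ordinal alpha is (the order type of) a well-order W; the ordinals
   <= alpha are modelled by option W, with None = alpha itself (top). *)
Section Ord.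
Variable W : wordT.

Definition olt (i j : option W) : Prop :=
  match i, j with
  | Some x, Some y => wlt x y
  | Some _, None => True
  | None, _ => False
  end.

Definition ole (i j : option W) : Prop := olt i j \/ i = j.

Definition succ_of (i j : option W) : Prop :=
  olt i j /\ forall k, olt i k -> ole j k.

Definition is_limit (j : option W) : Prop :=
  (exists i, olt i j) /\ forall i, ~ succ_of i j.

Definition is_least (j : option W) : Prop := forall k, ole j k.

Definition is_liminf Sig (ar : Sig -> nat) (a : option W -> term ar)
           (lam : option W) (t : term ar) : Prop :=
  exists m : option W -> term ar,
    (forall beta, olt beta lam ->
       is_glb (fun u => exists iota, ole beta iota /\ olt iota lam /\ u = a iota)
              (m beta)) /\
    is_lub (fun u => exists beta, olt beta lam /\ u = m beta) t.

End Ord.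

Section Reductions.
Variable Sig : Type.
Variable ar : Sig -> nat.
Variable R : rule ar -> Prop.

(* S = (t_iota ->_{pi_iota} t_{iota+1})_{iota < alpha}, alpha = rW;
   terms t_iota for iota <= alpha (rterm None is the term at index alpha,
   only meaningful when S is closed). *)
Record reduction := Reduction {
  rW : wordT;
  rterm : option rW -> term ar;
  rpos : rW -> pos;
  rrule : rW -> rule ar;
  rsubst : rW -> nat -> term ar;
  rrule_in : forall w, R (rrule w);
  rstep : forall w j, succ_of (Some w) j ->
            step (rterm (Some w)) (rterm j) (rpos w) (rrule w) (rsubst w) }.

Arguments rterm : clear implicits.
Arguments rpos : clear implicits.
Arguments rrule : clear implicits.
Arguments rsubst : clear implicits.

Definition starts_at (S : reduction) (s : term ar) : Prop :=
  forall j, is_least j -> rterm S j = s.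

(* S is closed iff its length is 0 or a successor ordinal *)
Definition closed (S : reduction) : Prop := ~ is_limit (None : option (rW S)).

Definition weakly_converges (S : reduction) (t : term ar) : Prop :=
  (forall w, is_limit (Some w) ->
     is_liminf (rterm S) (Some w) (rterm S (Some w))) /\
  (closed S -> t = rterm S None) /\
  (~ closed S -> is_liminf (rterm S) None t).

(* contexts c_iota = t_iota[bot]_{pi_iota}; extended arbitrarily at alpha *)
Definition strongly_converges (S : reduction) (t : term ar) : Prop :=
  exists c : option (rW S) -> term ar,
    (forall w p, c (Some w) p = replace (rterm S (Some w)) (rpos S w) (@bot_fun Sig) p) /\
    (forall w, is_limit (Some w) -> is_liminf c (Some w) (rterm S (Some w))) /\
    (closed S -> t = rterm S None) /\
    (~ closed S -> is_liminf c None t).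

Definition weakly_p_converges_to (s t : term ar) : Prop :=
  exists S : reduction, starts_at S s /\ weakly_converges S t.

Definition strongly_p_converges_to (s t : term ar) : Prop :=
  exists S : reduction, starts_at S s /\ strongly_converges S t.

End Reductions.

(* Keep the ordinal, the redex positions and the rules of the strongly convergent
   reduction (t_i), and rebuild its terms by transfinite recursion: t'_0 = s,
   t'_(i+1) contracts the redex at the same position in t'_i, and t'_l is the liminf
   of the t'_i below a limit l.  By induction t_i <=_bot t'_i.  At a successor this
   holds because a redex of a left-linear rule in t stays a redex, with a larger
   matching substitution, in every t' >=_bot t, and contracting it preserves the order.
   At a limit, t_l = liminf c_i by strong convergence, and c_i <=_bot t_i <=_bot t'_i,
   so monotonicity of liminf gives t_l <=_bot t'_l.  The new reduction is weakly
   continuous by construction; its term at the length alpha itself, which for an open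
   reduction the recursion makes the liminf, dominates t in the same way. *)

From mathcomp Require Import ssreflect ssrfun ssrbool eqtype ssrnat seq.
From Stdlib Require Import Classical ClassicalEpsilon FunctionalExtensionality.

Set Implicit Arguments.
Unset Strict Implicit.
Unset Printing Implicit Defensive.

Definition classicb (P : Prop) : bool := is_left (excluded_middle_informative P).

Lemma classicbP (P : Prop) : reflect P (classicb P).
Proof. by rewrite /classicb; case: excluded_middle_informative => h; constructor. Qed.

Lemma rcons_eq_cat_cons (T : Type) (p : seq T) i q j r : rcons p i = q ++ j :: r ->
  (q = p /\ j = i /\ r = [::]) \/ (exists r', r = rcons r' i /\ p = q ++ j :: r').
Proof.
case/lastP: r => [|r' k]; first by rewrite cats1 => /rcons_inj [-> ->]; left.
by rewrite -rcons_cons -rcons_cat => /rcons_inj [-> ->]; right; exists r'.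
Qed.

Lemma prefix_rcons_inv (T : eqType) (s p : seq T) i :
  prefix s (rcons p i) -> s = rcons p i \/ prefix s p.
Proof.
case/prefixP => s2; case/lastP: s2 => [|s2 k]; first by rewrite cats0; left.
by rewrite -rcons_cat => /rcons_inj [-> _]; right; apply: prefix_prefix.
Qed.

Section PartialTerms.
Variables (Sig : Type) (ar : Sig -> nat).
Notation term := (term ar).
Notation le := (@le_bot Sig ar).

Lemma le_bot_refl (u : term) : le u u.
Proof. by []. Qed.

Lemma le_bot_trans (u v w : term) : le u v -> le v w -> le u w.
Proof. by move=> huv hvw p hn hb; rewrite huv // hvw // -huv. Qed.

Lemma term_root_defined (u : term) : u [::] <> None.
Proof. by case: (twf u). Qed.

Lemma term_childP (u : term) p i :
  u (rcons p i) <> None <-> exists g, u p = Some (LFun g) /\ i < ar g.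
Proof. by case: (twf u). Qed.

Lemma term_prefix_defined (u : term) q r : u (q ++ r) <> None -> u q <> None.
Proof.
elim/last_ind: r => [|r i IH]; first by rewrite cats0.
by rewrite -rcons_cat => /term_childP [g [hg _]]; apply: IH; rewrite hg.
Qed.

Lemma term_strict_prefix_fun (u : term) q i r : u (q ++ i :: r) <> None ->
  exists g, u q = Some (LFun g) /\ i < ar g.
Proof. by rewrite -cat_rcons => /term_prefix_defined /term_childP. Qed.

Lemma le_bot_defined (u v : term) p : le u v -> u p <> None -> v p <> None.
Proof.
move=> huv; elim/last_ind: p => [|p i _] hp; first exact: term_root_defined.
have [g [hg hi]] := (term_childP u p i).1 hp.
by apply/term_childP; exists g; rewrite -huv ?hg.
Qed.

Lemma le_bot_undefined (u v : term) a p :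
  le u v -> u a <> None -> u (a ++ p) = None -> v (a ++ p) <> None ->
  exists q i r, p = q ++ i :: r /\ u (a ++ q) = Some LBot.
Proof.
move=> huv ha; elim/last_ind: p => [|p i IH]; first by rewrite cats0.
rewrite -rcons_cat => hu hv.
case hp: (u (a ++ p)) => [[g|x|]|].
- have [g' [hg' hi]] := (term_childP v _ i).1 hv.
  rewrite -huv hp // in hg'; case: hg' => eg; subst g'.
  have : u (rcons (a ++ p) i) <> None by apply/term_childP; exists g.
  by rewrite hu.
- have [g' [hg' _]] := (term_childP v _ i).1 hv.
  by rewrite -huv hp in hg'.
- by exists p, i, [::]; rewrite cats1.
- have [|q [j [r [-> hq]]]] := IH hp.
    by have [g [-> _]] := (term_childP v _ i).1 hv.
  by exists q, j, (rcons r i); rewrite rcons_cat rcons_cons.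
Qed.

Lemma bot_fun_is_term : is_term ar (@bot_fun Sig).
Proof. by split=> // -[|? ?] i; split=> // -[g []]. Qed.

Definition bot_term : term := mkTerm bot_fun_is_term.

Definition common_funs_above (P : term -> Prop) (p : pos) : Prop :=
  forall q i r, p = q ++ i :: r -> exists g, forall u, P u -> u q = Some (LFun g).

(* [u0] is any member of [P]; where the members of [P] disagree the meet is [bot]. *)
Definition glb_fun (P : term -> Prop) (u0 : term) (p : pos) : option (lab Sig) :=
  if classicb (common_funs_above P p /\ u0 p <> None) then
    if classicb (forall u, P u -> u p = u0 p) then u0 p else Some LBot
  else None.

Lemma glb_fun_is_term P u0 : P u0 -> is_term ar (glb_fun P u0).
Proof.
move=> H0; split.
  rewrite /glb_fun; case: classicbP => [[_ hd]|hn _]; first by case: classicbP.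
  by apply: hn; split; [move=> [|? ?] | exact: term_root_defined].
move=> p i; rewrite /glb_fun; split.
  case: classicbP => [[hc hd] _|//].
  have [g hg] := hc p i [::] (esym (cats1 p i)).
  have hu0 := hg _ H0.
  have [g' [hg' hi]] := (term_childP u0 p i).1 hd.
  rewrite hu0 in hg'; case: hg' => eg; subst g'.
  exists g; split=> //.
  case: classicbP => [_|hn]; last first.
    exfalso; apply: hn; split; last by rewrite hu0.
    by move=> q j r e; apply: (hc q j (rcons r i)); rewrite e rcons_cat.
  by case: classicbP => // hn; exfalso; apply: hn => u hu; rewrite hu0 hg.
move=> [g [hg hi]]; move: hg.
case: classicbP => [[hc hd]|//]; case: classicbP => [hall|//] hu0.
case: classicbP => [_|hn]; first by case: classicbP => // _; apply/term_childP; exists g.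
exfalso; apply: hn; split; last by apply/term_childP; exists g.
move=> q j r e; case: (rcons_eq_cat_cons e) => [[-> _]|[r1 [_ hp]]]; last exact: hc hp.
by exists g => u hu; rewrite hall.
Qed.

Lemma glb_term_is_glb P u0 (H0 : P u0) : is_glb P (mkTerm (glb_fun_is_term H0)).
Proof.
split=> [u hu p|m hm p hn hb] /=; rewrite /glb_fun.
  by case: classicbP => [_|//]; case: classicbP => [hall _ _|_ _ []//]; rewrite hall.
have hP u : P u -> m p = u p by move=> hu; apply: hm.
case: classicbP => [_|hn'].
  by case: classicbP => [_|[] u hu]; rewrite -!hP.
exfalso; apply: hn'; split; last by rewrite -(hP u0 H0).
move=> q j r e; subst p; have [g [hg _]] := term_strict_prefix_fun hn.
by exists g => u hu; rewrite -(hm u hu q) ?hg.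
Qed.

Lemma glb_exists (P : term -> Prop) : (exists u, P u) -> exists m, is_glb P m.
Proof. by move=> [u0 H0]; exists (mkTerm (glb_fun_is_term H0)); apply: glb_term_is_glb. Qed.

Definition directed (D : term -> Prop) : Prop :=
  forall u v, D u -> D v -> exists w, D w /\ le u w /\ le v w.

Definition proper_at (u : term) p : Prop := u p <> None /\ u p <> Some LBot.

(* The join of a directed set takes at each position the (unique) non-[bot] label
   that some member carries there. *)
Definition lub_fun (D : term -> Prop) (p : pos) : option (lab Sig) :=
  if classicb (exists u, D u /\ proper_at u p) then
    epsilon (inhabits None) (fun a => exists u, D u /\ proper_at u p /\ a = u p)
  else if classicb (exists u, D u /\ u p <> None) then Some LBot else None.

Section Directed.
Variable D : term -> Prop.
Hypothesis D_directed : directed D.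

Lemma lub_fun_chosen p : (exists u, D u /\ proper_at u p) ->
  exists u, D u /\ proper_at u p /\ lub_fun D p = u p.
Proof.
rewrite /lub_fun => -[u [hu hp]]; case: classicbP => [_|[]]; last by exists u.
apply: (epsilon_spec (inhabits None)
  (fun a => exists u, D u /\ proper_at u p /\ a = u p)).
by exists (u p), u.
Qed.

Lemma lub_fun_proper u p : D u -> proper_at u p -> lub_fun D p = u p.
Proof.
move=> hu hp; have [|v [hv [[hv1 hv2] ->]]] := @lub_fun_chosen p; first by exists u.
have [w [_ [huw hvw]]] := D_directed hu hv.
by rewrite (hvw p hv1 hv2) (huw p hp.1 hp.2).
Qed.

Lemma lub_fun_improper p : ~ (exists u, D u /\ proper_at u p) ->
  lub_fun D p = if classicb (exists u, D u /\ u p <> None) then Some LBot else None.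
Proof. by rewrite /lub_fun; case: classicbP. Qed.

Lemma lub_fun_defined u p : D u -> u p <> None -> lub_fun D p <> None.
Proof.
move=> hu hp; case: (classicbP (exists u, D u /\ proper_at u p)) => [hex|hn].
  by have [v [_ [[hv _] ->]]] := lub_fun_chosen hex.
by rewrite lub_fun_improper //; case: classicbP => // -[]; exists u.
Qed.

Lemma lub_fun_is_term : (exists u, D u) -> is_term ar (lub_fun D).
Proof.
move=> [u0 H0]; split; first by apply: (lub_fun_defined H0); apply: term_root_defined.
move=> p i; split.
  case: (classicbP (exists u, D u /\ proper_at u (rcons p i))) => [hex|hn] hd.
    have [u [hu [[hup _] _]]] := lub_fun_chosen hex.
    have [g [hg hi]] := (term_childP u p i).1 hup.
    by exists g; rewrite (lub_fun_proper hu) ?hg // /proper_at hg.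
  move: hd; rewrite lub_fun_improper //; case: classicbP => // -[u [hu hup]] _.
  have [g [hg hi]] := (term_childP u p i).1 hup.
  by exists g; rewrite (lub_fun_proper hu) ?hg // /proper_at hg.
case: (classicbP (exists u, D u /\ proper_at u p)) => [hex|hn] [g [hg hi]].
  have [u [hu [_ hup]]] := lub_fun_chosen hex; rewrite hup in hg.
  by apply: (lub_fun_defined hu); apply/term_childP; exists g.
by move: hg; rewrite lub_fun_improper //; case: classicbP.
Qed.

Lemma lub_term_is_lub (hD : exists u, D u) : is_lub D (mkTerm (lub_fun_is_term hD)).
Proof.
split=> [u hu p hn hb|m hm p] /=; first by rewrite (lub_fun_proper hu).
case: (classicbP (exists u, D u /\ proper_at u p)) => [hex|hn].
  by have [u [hu [[hu1 hu2] ->]]] := lub_fun_chosen hex; apply: hm.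
by rewrite lub_fun_improper //; case: classicbP.
Qed.

End Directed.
End PartialTerms.

Section Ordinals.
Variable W : wordT.
Notation ord := (option W).

Lemma olt_irr (i : ord) : ~ olt i i.
Proof.
case: i => [x|] //=; elim: (wlt_wf x) => y _ IH hyy.
exact: (IH _ hyy hyy).
Qed.

Lemma olt_trans (i j k : ord) : olt i j -> olt j k -> olt i k.
Proof. by case: i => [x|]; case: j => [y|]; case: k => [z|] //=; apply: wlt_trans. Qed.

Lemma olt_total (i j : ord) : olt i j \/ i = j \/ olt j i.
Proof.
case: i => [x|]; case: j => [y|] /=; auto.
by case: (wlt_total x y) => [|[->|]]; auto.
Qed.

Lemma olt_wf : well_founded (@olt W).
Proof.
have acc_some x : Acc (@olt W) (Some x).
  elim: (wlt_wf x) => y _ IH; constructor=> -[z|] hz; [exact: IH | case: hz].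
by case=> [x|]; [exact: acc_some | constructor=> -[z|] hz; [exact: acc_some | case: hz]].
Qed.

Lemma ole_olt_trans (i j k : ord) : ole i j -> olt j k -> olt i k.
Proof. by case=> [h|->] //; apply: olt_trans. Qed.

Lemma ole_trans (i j k : ord) : ole i j -> ole j k -> ole i k.
Proof. by move=> hij [hjk|<-] //; left; apply: ole_olt_trans hjk. Qed.

Lemma succ_of_inj (i i' j : ord) : succ_of i j -> succ_of i' j -> i = i'.
Proof.
move=> [hij hi] [hi'j hi']; case: (olt_total i i') => [h|[//|h]].
  by case: (olt_irr (ole_olt_trans (hi _ h) hi'j)).
by case: (olt_irr (ole_olt_trans (hi' _ h) hij)).
Qed.

Lemma is_least_nlt (j k : ord) : is_least j -> ~ olt k j.
Proof. by move=> hj hkj; apply: (olt_irr (ole_olt_trans (hj k) hkj)). Qed.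

Lemma not_least_succ_is_limit (j : ord) :
  ~ is_least j -> ~ (exists w, succ_of (Some w) j) -> is_limit j.
Proof.
move=> hl hs; split.
  apply: NNPP => hn; apply: hl => k.
  by case: (olt_total j k) => [|[|h]]; [left | right | case: hn; exists k].
by move=> [w|] hw; [apply: hs; exists w | case: hw].
Qed.

End Ordinals.

Section Liminf.
Variables (Sig : Type) (ar : Sig -> nat) (W : wordT).
Notation term := (term ar).
Notation le := (@le_bot Sig ar).
Implicit Types (a b : option W -> term) (lam : option W).

Definition tail_set a lam beta (u : term) : Prop :=
  exists iota, ole beta iota /\ olt iota lam /\ u = a iota.

Lemma is_glb_ext (P Q : term -> Prop) m :
  (forall u, P u <-> Q u) -> is_glb P m -> is_glb Q m.
Proof.
move=> e [hlow hgreat]; split=> [u /e|m' hm']; first exact: hlow.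
by apply: hgreat => u /e; apply: hm'.
Qed.

Lemma is_liminf_ext a b lam t :
  (forall i, olt i lam -> a i = b i) -> is_liminf a lam t -> is_liminf b lam t.
Proof.
move=> e [m [hm hl]]; exists m; split=> // beta hb.
apply: is_glb_ext (hm beta hb) => u.
by split=> -[i [h1 [h2 ->]]]; exists i; rewrite e.
Qed.

Lemma is_liminf_le a b lam x y :
  (forall i, olt i lam -> le (a i) (b i)) ->
  is_liminf a lam x -> is_liminf b lam y -> le x y.
Proof.
move=> hab [ma [hma hla]] [mb [hmb hlb]].
apply: (proj2 hla) => _ [beta [hb ->]].
apply: le_bot_trans (proj1 hlb (mb beta) _); last by exists beta.
apply: (proj2 (hmb beta hb)) => _ [i [h1 [h2 ->]]].
apply: le_bot_trans (hab i h2).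
by apply: (proj1 (hma beta hb)); exists i.
Qed.

Lemma is_liminf_exists a lam : (exists i, olt i lam) -> exists t, is_liminf a lam t.
Proof.
move=> [i0 hi0].
pose m beta := epsilon (inhabits (bot_term ar)) (is_glb (tail_set a lam beta)).
have hm beta : olt beta lam -> is_glb (tail_set a lam beta) (m beta).
  move=> hb; apply: epsilon_spec; apply: glb_exists.
  by exists (a beta), beta; split=> //; right.
have hmono k1 k2 : olt k1 lam -> olt k2 lam -> ole k1 k2 -> le (m k1) (m k2).
  move=> h1 h2 h12; apply: (proj2 (hm k2 h2)) => _ [i [hi1 [hi2 ->]]].
  by apply: (proj1 (hm k1 h1)); exists i; split=> //; apply: ole_trans hi1.
pose D u := exists beta, olt beta lam /\ u = m beta.
have hD : exists u, D u by exists (m i0), i0.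
have D_directed : directed D.
  move=> _ _ [k1 [h1 ->]] [k2 [h2 ->]].
  case: (olt_total k1 k2) => [h|[<-|h]].
  - by exists (m k2); split; [exists k2 | split; [apply: hmono => //; left|]].
  - by exists (m k1); split; [exists k1|].
  - by exists (m k1); split; [exists k1 | split; [|apply: hmono => //; left]].
exists (mkTerm (lub_fun_is_term D_directed hD)), m; split=> //.
exact: lub_term_is_lub.
Qed.

Definition liminf a lam : term := epsilon (inhabits (bot_term ar)) (is_liminf a lam).

Lemma liminfP a lam : (exists i, olt i lam) -> is_liminf a lam (liminf a lam).
Proof. by move=> hne; apply: epsilon_spec; apply: is_liminf_exists. Qed.

End Liminf.

Section Substitution.
Variables (Sig : Type) (ar : Sig -> nat).
Notation term := (term ar).
Notation le := (@le_bot Sig ar).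
Implicit Types (t : pos -> option (lab Sig)) (sigma : nat -> term).

Lemma substf_var t sigma a p x : t a = Some (LVar x) -> substf t sigma a p = sigma x p.
Proof. by move=> h; case: p => [|i p] /=; rewrite h. Qed.

Lemma substf_cons t sigma a i p : (forall x, t a <> Some (LVar x)) ->
  substf t sigma a (i :: p) = substf t sigma (rcons a i) p.
Proof. by move=> h /=; case: (t a) h => [[g|x|]|] // h; case: (h x). Qed.

Lemma substf_no_var t sigma a p :
  (forall q r x, p = q ++ r -> t (a ++ q) <> Some (LVar x)) ->
  substf t sigma a p = t (a ++ p).
Proof.
elim: p a => [|i p IH] a h.
  rewrite cats0 /=; case E: (t a) => [[g|x|]|] //.
  by case: (h [::] [::] x); rewrite ?cats0.
rewrite substf_cons => [|x]; last by rewrite -[a]cats0; apply: h.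
rewrite IH; first by rewrite cat_rcons.
by move=> q r x e; rewrite cat_rcons; apply: (h (i :: q) r); rewrite e.
Qed.

Lemma substf_cat t sigma a q p :
  (forall q0 i r, q = q0 ++ i :: r -> exists g, t (a ++ q0) = Some (LFun g)) ->
  substf t sigma a (q ++ p) = substf t sigma (a ++ q) p.
Proof.
elim: q a => [|i q IH] a h; first by rewrite cats0.
have [g hg] := h [::] i q erefl; rewrite cats0 in hg.
rewrite cat_cons substf_cons ?hg // IH -?cat_rcons // => q0 j r e.
by rewrite cat_rcons; apply: (h (i :: q0) j r); rewrite e.
Qed.

Definition below_var t (p : pos) : Prop :=
  exists q x r, p = q ++ r /\ t q = Some (LVar x).

Lemma subst_below_var (l : term) sigma q x r :
  l q = Some (LVar x) -> apply_subst l sigma (q ++ r) = sigma x r.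
Proof.
move=> hq; rewrite /apply_subst (@substf_cat l sigma [::] q r) => [|q0 i r0 e].
  exact: substf_var.
have [|g [hg _]] := @term_strict_prefix_fun _ _ l q0 i r0; first by rewrite -e hq.
by exists g.
Qed.

Lemma subst_not_below_var (l : term) sigma p :
  ~ below_var l p -> apply_subst l sigma p = l p.
Proof. by move=> hp; apply: substf_no_var => q r x e hq; apply: hp; exists q, x, r. Qed.

Lemma below_var_rcons t p i : below_var t (rcons p i) ->
  below_var t p \/ exists x, t (rcons p i) = Some (LVar x).
Proof.
move=> [q [x [r [e hq]]]]; case/lastP: r e => [|r k].
  by rewrite cats0 => ->; right; exists x.
by rewrite -rcons_cat => /rcons_inj [-> _]; left; exists q, x, r.
Qed.

Lemma apply_subst_is_term (l : term) sigma : is_term ar (apply_subst l sigma).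
Proof.
split.
  case: (classic (below_var l [::])) => [[[|? ?] [x [[|? ?] [// _ hx]]]]|hn] //.
    have := @subst_below_var l sigma [::] x [::] hx; rewrite /= => ->.
    exact: term_root_defined.
  by rewrite subst_not_below_var //; apply: term_root_defined.
move=> p i; case: (classic (below_var l p)) => [[q [x [r [-> hq]]]]|hn].
  by rewrite rcons_cat !(subst_below_var _ _ hq); apply: term_childP.
rewrite (subst_not_below_var _ hn).
case: (classic (exists x, l (rcons p i) = Some (LVar x))) => [[x hx]|hnx].
  rewrite -[rcons p i]cats0 (subst_below_var _ _ hx).
  by rewrite -term_childP hx; split=> // _; apply: term_root_defined.
by rewrite subst_not_below_var; [apply: term_childP | case/below_var_rcons].
Qed.

Definition subst_term (l : term) sigma : term := mkTerm (apply_subst_is_term l sigma).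

Lemma subst_term_le (l : term) sigma1 sigma2 :
  (forall x, le (sigma1 x) (sigma2 x)) -> le (subst_term l sigma1) (subst_term l sigma2).
Proof.
move=> hs p /=; case: (classic (below_var l p)) => [[q [x [r [-> hq]]]]|hn].
  by rewrite !(subst_below_var _ _ hq); apply: hs.
by rewrite !subst_not_below_var.
Qed.

End Substitution.

Section Contraction.
Variables (Sig : Type) (ar : Sig -> nat).
Notation term := (term ar).
Notation le := (@le_bot Sig ar).

Lemma replace_is_term (s u : term) pi : s pi <> None -> is_term ar (replace s pi u).
Proof.
move=> hpi; rewrite /replace; split.
  by case: pi hpi => [|k pi] _ /=; apply: term_root_defined.
move=> p i.
case hp: (prefix pi p).
  have [s2 ->] := prefixP hp.
  by rewrite rcons_cat !prefix_prefix !drop_size_cat //; apply: term_childP.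
case hpi': (prefix pi (rcons p i)); last exact: term_childP.
case: (prefix_rcons_inv hpi') => [e|]; last by rewrite hp.
split=> [_|_]; first by apply/term_childP; rewrite -e.
by rewrite e drop_size; apply: term_root_defined.
Qed.

Lemma subterm_is_term (u : term) d : u d <> None -> is_term ar (fun p => u (d ++ p)).
Proof.
move=> h; split; first by rewrite cats0.
by move=> p i; rewrite -rcons_cat; apply: term_childP.
Qed.

(* junk value [bot] at positions outside the domain *)
Definition subterm_at (u : term) (d : pos) : term :=
  match excluded_middle_informative (u d <> None) with
  | left h => mkTerm (subterm_is_term h)
  | right _ => bot_term ar
  end.

Lemma subterm_atE (u : term) d p : u d <> None -> subterm_at u d p = u (d ++ p).
Proof. by rewrite /subterm_at; case: excluded_middle_informative. Qed.

Definition var_pos (l : term) (x : nat) : pos :=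
  epsilon (inhabits [::]) (fun q => l q = Some (LVar x)).

Lemma var_posE (l : term) x q : linear l -> l q = Some (LVar x) -> var_pos l x = q.
Proof.
move=> hlin hq; apply: (hlin x _ q _ hq).
by apply: (epsilon_spec (inhabits [::]) (fun q => l q = Some (LVar x))); exists q.
Qed.

Definition matching_subst (l : term) (sigma : nat -> term) (t' : term) (pi : pos) :
  nat -> term :=
  fun x => if classicb (occurs x l) then subterm_at t' (pi ++ var_pos l x) else sigma x.

Section Matching.
Variables (t t' l : term) (sigma : nat -> term) (pi : pos).
Hypothesis le_t_t' : le t t'.
Hypothesis l_linear : linear l.
Hypothesis l_bot_free : bot_free l.
Hypothesis t_matches : forall p, t (pi ++ p) = apply_subst l sigma p.
Notation sigma' := (matching_subst l sigma t' pi).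

Lemma matched_defined_at_var q x : l q = Some (LVar x) -> t (pi ++ q) <> None.
Proof.
move=> hq; rewrite -[q]cats0 t_matches (subst_below_var _ _ hq).
exact: term_root_defined.
Qed.

Lemma matching_subst_var q x r :
  l q = Some (LVar x) -> sigma' x r = t' (pi ++ q ++ r).
Proof.
move=> hq; rewrite /matching_subst; case: classicbP => [_|[]]; last by exists q.
rewrite (var_posE l_linear hq) subterm_atE ?catA //.
exact: le_bot_defined le_t_t' (matched_defined_at_var hq).
Qed.

Lemma matching_subst_matches p : t' (pi ++ p) = apply_subst l sigma' p.
Proof.
case: (classic (below_var l p)) => [[q [x [r [-> hq]]]]|hn].
  by rewrite (subst_below_var _ _ hq) (matching_subst_var _ hq).
have t_l q r : p = q ++ r -> t (pi ++ q) = l q.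
  move=> e; rewrite t_matches subst_not_below_var // => -[q1 [x [r1 [e1 hx]]]].
  by apply: hn; exists q1, x, (r1 ++ r); rewrite e e1 catA.
have t_l_p : t (pi ++ p) = l p by rewrite (t_l p [::]) ?cats0.
rewrite subst_not_below_var //; case hp: (l p) => [a|]; last first.
  rewrite hp in t_l_p; apply: NNPP => ht'.
  have [|q [j [r [e hq]]]] := le_bot_undefined le_t_t' _ t_l_p ht'.
    rewrite -[pi]cats0 t_matches.
    exact: (@term_root_defined _ _ (subst_term l sigma)).
  by apply: (l_bot_free (p := q)); rewrite -(t_l _ _ e).
have ha : Some a <> Some LBot by rewrite -hp; apply: l_bot_free.
by rewrite -hp -t_l_p le_t_t' // t_l_p hp.
Qed.

Lemma subst_le_matching_subst x : le (sigma x) (sigma' x).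
Proof.
case: (classic (occurs x l)) => [[q hq]|hx]; last first.
  by rewrite /matching_subst; case: classicbP => // _; apply: le_bot_refl.
move=> r; rewrite (matching_subst_var _ hq).
have -> : sigma x r = t (pi ++ q ++ r) by rewrite t_matches (subst_below_var _ _ hq).
exact: le_t_t'.
Qed.

End Matching.

(* The [right] branch is a junk value: lifted redex positions are always defined. *)
Definition contract (t' : term) (pi : pos) (rho : rule ar) (sigma : nat -> term) : term :=
  match excluded_middle_informative (t' pi <> None) with
  | left h => mkTerm (@replace_is_term t'
                (subst_term rho.2 (matching_subst rho.1 sigma t' pi)) pi h)
  | right _ => t'
  end.

Lemma contractE (t' : term) pi rho sigma p : t' pi <> None ->
  contract t' pi rho sigma p =
  replace t' pi (apply_subst rho.2 (matching_subst rho.1 sigma t' pi)) p.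
Proof. by rewrite /contract; case: excluded_middle_informative. Qed.

Lemma step_le_bot_lift (t t1 t' : term) pi (rho : rule ar) sigma :
  is_rule rho -> linear rho.1 -> le t t' -> step t t1 pi rho sigma ->
  step t' (contract t' pi rho sigma) pi rho (matching_subst rho.1 sigma t' pi) /\
  le t1 (contract t' pi rho sigma).
Proof.
case: rho => l r /= [_ [_ [l_bot_free _]]] l_linear le_t_t' [/= t_matches t1E].
have hpi : t' pi <> None.
  apply: le_bot_defined le_t_t' _; rewrite -[pi]cats0 t_matches.
  exact: (@term_root_defined _ _ (subst_term l sigma)).
split; first split=> p.
- exact: (matching_subst_matches le_t_t' l_linear l_bot_free t_matches).
- by rewrite contractE.
move=> p; rewrite t1E contractE //= /replace; case: prefix; last exact: le_t_t'.
by move=> hn hb; apply: (subst_term_le (subst_le_matching_subst le_t_t' l_linear t_matches)).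
Qed.

End Contraction.

Section WeakReduction.
Variables (Sig : Type) (ar : Sig -> nat) (R : rule ar -> Prop).
Hypothesis R_TRS : TRS R.
Hypothesis R_left_linear : left_linear R.
Variables (S : reduction R) (s : term ar).
Hypothesis S_starts : starts_at S s.
Notation term := (term ar).
Notation le := (@le_bot Sig ar).
Notation W := (rW S).
Notation T := (@rterm _ _ _ S).
Notation pi := (@rpos _ _ _ S).
Notation rho := (@rrule _ _ _ S).
Notation sigma := (@rsubst _ _ _ S).

Definition lifted_term_step (j : option W) (prev : option W -> term) : term :=
  if classicb (is_least j) then s else
  match excluded_middle_informative (exists w, succ_of (Some w) j) with
  | left h => let w := proj1_sig (constructive_indefinite_description _ h) in
              contract (prev (Some w)) (pi w) (rho w) (sigma w)
  | right _ => liminf prev j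
  end.

Definition restrict_below (j : option W) (f : forall i, olt i j -> term) (i : option W) :
  term :=
  match excluded_middle_informative (olt i j) with left h => f i h | right _ => s end.

Definition lifted_term : option W -> term :=
  Fix (@olt_wf W) (fun _ => term) (fun j f => lifted_term_step j (restrict_below f)).

Notation T' := lifted_term.

Lemma lifted_termE j :
  T' j = lifted_term_step j (fun i => if classicb (olt i j) then T' i else s).
Proof.
rewrite /lifted_term Fix_eq /restrict_below.
  by congr lifted_term_step; apply: functional_extensionality => i; case: classicbP;
     case: excluded_middle_informative.
move=> k f g efg; congr lifted_term_step; apply: functional_extensionality => i.
by case: excluded_middle_informative.
Qed.

Lemma lifted_term_least j : is_least j -> T' j = s.
Proof. by move=> hj; rewrite lifted_termE /lifted_term_step; case: classicbP. Qed.

Lemma lifted_term_succ w j : succ_of (Some w) j ->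
  T' j = contract (T' (Some w)) (pi w) (rho w) (sigma w).
Proof.
move=> hw; rewrite lifted_termE /lifted_term_step.
case: classicbP => [hl|_]; first by case: (is_least_nlt hl hw.1).
case: excluded_middle_informative => [h|[]]; last by exists w.
case: (constructive_indefinite_description _ h) => w' hw' /=.
case: (succ_of_inj hw' hw) => ->.
by case: classicbP => // -[]; case: hw.
Qed.

Lemma lifted_term_limit j : is_limit j -> is_liminf T' j (T' j).
Proof.
move=> hj; rewrite [T' j]lifted_termE /lifted_term_step.
case: classicbP => [hl|_]; first by case: hj.1 => i /(is_least_nlt hl).
case: excluded_middle_informative => [[w hw]|_]; first by case: (hj.2 _ hw).
apply: is_liminf_ext (liminfP _ hj.1) => i hi.
by case: classicbP.
Qed.

Definition lifted_subst (w : W) : nat -> term :=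
  matching_subst (rho w).1 (sigma w) (T' (Some w)) (pi w).

Lemma lifted_term_succ_step w j : succ_of (Some w) j -> le (T (Some w)) (T' (Some w)) ->
  step (T' (Some w)) (T' j) (pi w) (rho w) (lifted_subst w) /\ le (T j) (T' j).
Proof.
move=> hw hle; have hR := rrule_in w; rewrite (lifted_term_succ hw).
exact: step_le_bot_lift (R_TRS hR) (R_left_linear hR) hle (rstep hw).
Qed.

Section StronglyConvergent.
Variable c : option W -> term.
Hypothesis c_context :
  forall w p, c (Some w) p = replace (T (Some w)) (pi w) (@bot_fun Sig) p.
Hypothesis c_liminf : forall w, is_limit (Some w) -> is_liminf c (Some w) (T (Some w)).

Lemma context_le_term w : le (c (Some w)) (T (Some w)).
Proof. by move=> p; rewrite c_context /replace; case: prefix => //; case: drop. Qed.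

Lemma liminf_context_le_lifted_term j x : is_limit j -> is_liminf c j x ->
  (forall w, olt (Some w) j -> le (T (Some w)) (T' (Some w))) -> le x (T' j).
Proof.
move=> hj hx hle; apply: is_liminf_le hx (lifted_term_limit hj) => -[w|] hw //.
exact: le_bot_trans (context_le_term (w := w)) (hle w hw).
Qed.

Lemma term_le_lifted_term j : (j = None -> closed S) -> le (T j) (T' j).
Proof.
elim/(well_founded_ind (@olt_wf W)): j => j IH hj.
case: (classicbP (is_least j)) => [hl|hnl].
  by rewrite lifted_term_least // S_starts //; apply: le_bot_refl.
case: (classicbP (exists w, succ_of (Some w) j)) => [[w hw]|hns].
  by case: (lifted_term_succ_step hw (IH _ hw.1 _)).
have hlim := not_least_succ_is_limit hnl hns.
case: j IH hj {hnl hns} hlim => [w|] IH hj hlim; last by case: (hj erefl).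
by apply: (liminf_context_le_lifted_term hlim (c_liminf hlim)) => v hv; apply: IH.
Qed.

Lemma lifted_step w j : succ_of (Some w) j ->
  step (T' (Some w)) (T' j) (pi w) (rho w) (lifted_subst w).
Proof.
by move=> hw; case: (lifted_term_succ_step hw (term_le_lifted_term (j := Some w) _)).
Qed.

Definition lifted_reduction : reduction R := Reduction (@rrule_in _ _ _ S) lifted_step.

End StronglyConvergent.
End WeakReduction.

Theorem proposition3p7 (Sig : Type) (ar : Sig -> nat) (R : rule ar -> Prop)
  (HTRS : TRS R) (HLL : left_linear R) (s t : term ar) :
  strongly_p_converges_to R s t ->
  exists t' : term ar, le_bot t t' /\ weakly_p_converges_to R s t'.
Proof.
move=> [S [Hs [c [c_context [c_liminf [Ht_closed Ht_open]]]]]].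
have limit_of_open : ~ closed S -> is_limit (None : option (rW S)).
  by move=> ho; apply: NNPP.
pose T' := lifted_term (S := S) s.
exists (T' None); split.
  case: (classic (closed S)) => [hc|ho].
    by rewrite (Ht_closed hc); apply: (term_le_lifted_term HTRS HLL Hs c_context c_liminf).
  apply: (liminf_context_le_lifted_term (s := s) c_context (limit_of_open ho) (Ht_open ho)).
  move=> w _.
  exact: (term_le_lifted_term HTRS HLL Hs c_context c_liminf (j := Some w)).
exists (lifted_reduction HTRS HLL Hs c_context c_liminf); split.
  by move=> j hj; apply: lifted_term_least.
split=> [w hw|] /=; first exact: lifted_term_limit.
by split=> // ho; apply: lifted_term_limit; apply: limit_of_open.
Qed.
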